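(* Fix a prime $p$ and an integer $h\ge 1$, and work in the category $\mathcal{C}_{p^h}$ (defined in the context). Let $\iota_R\colon (A,I_A,\psi_A)\to (R,I_R,\psi_R)$ and $\iota_S\colon (A,I_A,\psi_A)\to (S,I_S,\psi_S)$ be morphisms in $\mathcal{C}_{p^h}$. Suppose that $I_R=\iota_R(I_A)R$ and that $(S,I_S,\psi_S)$ is complete and perfect. Let $\mu\colon R\to S$ be a ring homomorphism with $\mu\iota_R=\iota_S$. Then there exists a unique morphism $\widehat\mu\colon (R,I_R,\psi_R)\to (S,I_S,\psi_S)$ in $\mathcal{C}_{p^h}$ such that $\widehat\mu\iota_R=\iota_S$ and $\widehat\mu(x)\equiv \mu(x) \bmod I_S$ for all $x\in R$.
   Context: $\mathcal{C}_{p^h}$ is the category whose objects are triples $(R,I_R,\psi_R)$ with $R$ a commutative ring, $I_R\subseteq R$ an ideal with $p\in I_R$, and $\psi_R\colon R\to R$ a ring endomorphism such that $\psi_R(x)\equiv x^{p^h}\bmod I_R$ for all $x\in R$. A morphism $(R,I_R,\psi_R)\to(S,I_S,\psi_S)$ is a ring homomorphism $\mu\colon R\to S$ with $\mu(I_R)\subseteq I_S$ and $\mu\psi_R=\psi_S\mu$. An object is complete if $R\to\lim_k R/I_R^k$ is an isomorphism, and perfect if $\psi_R$ is an isomorphism with $\psi_R(I_R)=I_R$. *)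

From HB Require Import structures.
From mathcomp Require Import all_boot all_order all_algebra.
Set Implicit Arguments. Unset Strict Implicit. Unset Printing Implicit Defensive.
Import GRing.Theory.
Local Open Scope ring_scope.

Section Defs.
Variable R : comPzRingType.

Definition is_ideal (I : R -> Prop) : Prop :=
  [/\ I 0, (forall x y, I x -> I y -> I (x + y)), (forall x, I x -> I (- x))
    & (forall a x, I x -> I (a * x))].

Definition gen_ideal (G : R -> Prop) : R -> Prop :=
  fun x => forall J, is_ideal J -> (forall y, G y -> J y) -> J x.

Definition ideal_pow (I : R -> Prop) (k : nat) : R -> Prop :=
  gen_ideal (fun x => exists s : seq R,
    [/\ size s = k, (forall y, y \in s -> I y) & x = \prod_(y <- s) y]).

Definition Cph_obj (p h : nat) (I : R -> Prop) (psi : R -> R) : Prop :=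
  [/\ is_ideal I, I (p%:R) & forall x, I (psi x - x ^+ (p ^ h))].

(* Completeness: R -> lim_k R/I^k is an isomorphism.  Elements of the inverse
   limit are represented by compatible sequences (x_k) with
   x_{k+1} = x_k mod I^k, two sequences being identified when x_k = y_k mod I^k
   for all k; the canonical map sends x to the constant sequence. *)
Definition complete (I : R -> Prop) : Prop :=
  (forall x y : R, (forall k, ideal_pow I k (x - y)) -> x = y) /\
  (forall u : nat -> R, (forall k, ideal_pow I k (u k.+1 - u k)) ->
     exists x : R, forall k, ideal_pow I k (x - u k)).

Definition perfect (I : R -> Prop) (psi : R -> R) : Prop :=
  bijective psi /\ (forall y, I y <-> exists2 x, I x & psi x = y).
End Defs.

Definition Cph_morph (R S : comPzRingType) (IR : R -> Prop) (psiR : R -> R)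
  (IS : S -> Prop) (psiS : S -> S) (mu : {rmorphism R -> S}) : Prop :=
  (forall x, IR x -> IS (mu x)) /\ (forall x, mu (psiR x) = psiS (mu x)).

(* The lift is the I_S-adic limit of mu_n := psi_S^-n o mu o psi_R^n.  Everything
   rests on one congruence: if morphisms f, g : R -> S agree on iota_R(A) and
   f = g mod I_S^(k+1), then f o psi_R = g o psi_R mod I_S^(k+2).  Indeed psi_R
   is x |-> x^q (q = p^h) modulo I_R = iota_R(I_A) R, on which f - g picks up an
   extra factor of I_S, and a = b mod I^(k+1) gives a^q = b^q mod I^(k+2) since
   q lies in I.  Hence mu_(n+1) = mu_n mod I_S^(n+1), the limit commutes with
   psi, and two psi-compatible lifts agreeing mod I_S agree mod every I_S^k. *)
From HB Require Import structures.
From mathcomp Require Import all_boot all_order all_algebra.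
From mathcomp Require Import ring.
From Stdlib Require Import ClassicalEpsilon.
Set Implicit Arguments. Unset Strict Implicit. Unset Printing Implicit Defensive.
Import GRing.Theory.
Local Open Scope ring_scope.

Section Ideals.
Variable T : comPzRingType.
Implicit Types (I J G : T -> Prop) (a b x y : T).

Lemma gen_ideal_is_ideal G : is_ideal (gen_ideal G).
Proof.
split=> [J [] //|x y hx hy J hJ hG|x hx J hJ hG|c x hx J hJ hG]; case: (hJ) => _ hD hN hM.
- by apply: hD; [apply: hx|apply: hy].
- by apply: hN; apply: hx.
- by apply: hM; apply: hx.
Qed.

Lemma gen_ideal_sub G x : G x -> gen_ideal G x.
Proof. by move=> Gx J _; apply. Qed.

Lemma gen_ideal_min G J :
  is_ideal J -> (forall y, G y -> J y) -> forall x, gen_ideal G x -> J x.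
Proof. by move=> hJ hG x; apply. Qed.

Section IdealClosure.
Variables (I : T -> Prop) (hI : is_ideal I).

Lemma ideal0 : I 0. Proof. by case: hI. Qed.

Lemma idealD x y : I x -> I y -> I (x + y). Proof. by case: hI => _ hD _ _; apply: hD. Qed.

Lemma idealN x : I x -> I (- x). Proof. by case: hI => _ _ hN _; apply: hN. Qed.

Lemma idealB x y : I x -> I y -> I (x - y).
Proof. by move=> hx hy; apply: idealD => //; apply: idealN. Qed.

Lemma idealMl a x : I x -> I (a * x). Proof. by case: hI => _ _ _ hM; apply: hM. Qed.

Lemma idealMr a x : I x -> I (x * a). Proof. by rewrite mulrC; apply: idealMl. Qed.

Lemma ideal_subrX n a b : I (a - b) -> I (a ^+ n - b ^+ n).
Proof. by rewrite subrXX; apply: idealMr. Qed.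

(* The cofactor of [a - b] in [a ^+ n - b ^+ n] is [n * b ^+ n.-1] modulo [I]. *)
Lemma ideal_subrXX_cofactor n a b :
  I n%:R -> I (a - b) -> I (\sum_(i < n) a ^+ (n.-1 - i) * b ^+ i).
Proof.
move=> hn hab.
have -> : \sum_(i < n) a ^+ (n.-1 - i) * b ^+ i
    = \sum_(i < n) (a ^+ (n.-1 - i) - b ^+ (n.-1 - i)) * b ^+ i + n%:R * b ^+ n.-1.
  rewrite -[n in n%:R]card_ord mulr_natl -sumr_const -big_split /=.
  apply: eq_bigr => i _; rewrite mulrBl -exprD subnK ?subrK //.
  by case: n {hn} i => [[]|n] //= i; rewrite -ltnS.
apply: idealD; last exact: idealMr.
by apply: (big_ind I ideal0 idealD) => i _; apply/idealMr/ideal_subrX.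
Qed.

End IdealClosure.

Lemma ideal_pow_is_ideal I k : is_ideal (ideal_pow I k).
Proof. exact: gen_ideal_is_ideal. Qed.

Lemma ideal_pow1 I : is_ideal I -> forall x, ideal_pow I 1 x <-> I x.
Proof.
move=> hI x; split.
  apply: gen_ideal_min => // y [s [hs hin ->]].
  case: s hs hin => [|z []] //= _ hin.
  by rewrite big_seq1; apply: hin; rewrite mem_seq1.
move=> hx; apply: gen_ideal_sub; exists [:: x]; split=> //; last by rewrite big_seq1.
by move=> y; rewrite mem_seq1 => /eqP ->.
Qed.

Lemma ideal_powMl I k a b : I a -> ideal_pow I k b -> ideal_pow I k.+1 (a * b).
Proof.
move=> ha; move: b; apply: (gen_ideal_min (J := fun b => ideal_pow I k.+1 (a * b))).
  have hIk := ideal_pow_is_ideal I k.+1.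
  split=> [|x y hx hy|x hx|c x hx].
  - by rewrite mulr0; apply: ideal0 hIk.
  - by rewrite mulrDr; apply: idealD hIk _ _ hx hy.
  - by rewrite mulrN; apply: idealN hIk _ hx.
  - by rewrite mulrCA; apply: idealMl hIk _ _ hx.
move=> y [s [hs hin ->]]; apply: gen_ideal_sub; exists (a :: s).
by split; [rewrite /= hs | move=> w; rewrite inE => /orP [/eqP ->|/hin] | rewrite big_cons].
Qed.

Lemma ideal_powS I k x : ideal_pow I k.+1 x -> ideal_pow I k x.
Proof.
apply: gen_ideal_min; first exact: ideal_pow_is_ideal.
move=> y [[|z s] [// [hs] hin ->]]; rewrite big_cons.
apply: (idealMl (ideal_pow_is_ideal _ _)).
apply: gen_ideal_sub; exists s; split=> // w hw.
by apply: hin; rewrite inE hw orbT.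
Qed.

Lemma ideal_pow_le I m n x : (m <= n)%N -> ideal_pow I n x -> ideal_pow I m x.
Proof.
move=> /subnK <-; elim: (n - m)%N => //= d IHd hx.
by apply: IHd; apply: ideal_powS.
Qed.

Lemma ideal_pow_subrX I n k a b : is_ideal I -> I n%:R ->
  ideal_pow I k.+1 (a - b) -> ideal_pow I k.+2 (a ^+ n - b ^+ n).
Proof.
move=> hI hn hab; rewrite subrXX mulrC; apply: ideal_powMl => //.
apply: ideal_subrXX_cofactor => //; apply/(ideal_pow1 hI).
exact: ideal_pow_le hab.
Qed.

End Ideals.

Section IdealMaps.
Variables (R S : comPzRingType) (f : {rmorphism R -> S}).

Lemma preim_ideal J : is_ideal J -> is_ideal (fun x => J (f x)).
Proof.
move=> hJ; split=> [|x y|x|a x]; rewrite ?rmorph0 ?rmorphD ?rmorphN ?rmorphM.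
- exact: ideal0 hJ.
- exact: (idealD hJ).
- exact: (idealN hJ).
- exact: (idealMl hJ).
Qed.

Lemma gen_ideal_rmorph G J : is_ideal J ->
  (forall y, G y -> J (f y)) -> forall x, gen_ideal G x -> J (f x).
Proof. by move=> hJ; apply: gen_ideal_min; apply: preim_ideal. Qed.

Lemma ideal_pow_rmorph I J : (forall x, I x -> J (f x)) ->
  forall k x, ideal_pow I k x -> ideal_pow J k (f x).
Proof.
move=> hIJ k; apply: gen_ideal_rmorph; first exact: ideal_pow_is_ideal.
move=> y [s [hs hin ->]]; apply: gen_ideal_sub; exists (map f s).
split; first by rewrite size_map.
by move=> w /mapP [z /hin /hIJ hz ->].
by rewrite rmorph_prod big_map.
Qed.

End IdealMaps.

Definition rmorph_of (R S : comPzRingType) (f : R -> S)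
    (fB : zmod_morphism f) (fM : monoid_morphism f) : {rmorphism R -> S} :=
  HB.pack_for {rmorphism R -> S} f
    (GRing.isZmodMorphism.Build R S f fB) (GRing.isMonoidMorphism.Build R S f fM).

Definition rmorph_inv (R S : comPzRingType) (f : {rmorphism R -> S}) (g : S -> R)
    (fK : cancel f g) (gK : cancel g f) : {rmorphism S -> R} :=
  rmorph_of (can2_zmod_morphism fK gK) (can2_monoid_morphism fK gK).

Section Completeness.
Variables (S : comPzRingType) (I : S -> Prop) (hcompl : complete I).

Lemma complete_eq x y : (forall k, ideal_pow I k.+1 (x - y)) -> x = y.
Proof. by move=> hxy; apply: hcompl.1 => k; apply: ideal_powS. Qed.

Lemma complete_rmorph_limit (R : comPzRingType) (f : nat -> {rmorphism R -> S}) :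
    (forall n x, ideal_pow I n.+1 (f n.+1 x - f n x)) ->
  exists g : {rmorphism R -> S}, forall n x, ideal_pow I n.+1 (g x - f n x).
Proof.
move=> hf.
have lim x : {y | forall n, ideal_pow I n.+1 (y - f n x)}.
  apply: constructive_indefinite_description.
  have [y hy] := hcompl.2 (fun n => f n x) (fun n => ideal_powS (hf n x)).
  exists y => n.
  have -> : y - f n x = (y - f n.+1 x) + (f n.+1 x - f n x) by rewrite addrA subrK.
  by apply: (idealD (ideal_pow_is_ideal _ _)); [apply: hy | apply: hf].
pose g x := sval (lim x).
have hg n x : ideal_pow I n.+1 (g x - f n x) := svalP (lim x) n.
have gB : zmod_morphism g.
  move=> x y; apply: complete_eq => k.
  have -> : g (x - y) - (g x - g y)
      = (g (x - y) - f k (x - y)) - (g x - f k x) + (g y - f k y).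
    by rewrite rmorphB; ring.
  have hIk := ideal_pow_is_ideal I k.+1.
  by apply: (idealD hIk); [apply: (idealB hIk)|]; apply: hg.
have gM : monoid_morphism g.
  split=> [|x y]; apply: complete_eq => k; first by have := hg k 1; rewrite rmorph1.
  have -> : g (x * y) - g x * g y
      = (g (x * y) - f k (x * y)) - (g x * (g y - f k y) + f k y * (g x - f k x)).
    by rewrite rmorphM; ring.
  have hIk := ideal_pow_is_ideal I k.+1.
  by apply: (idealB hIk); [|apply: (idealD hIk); apply: (idealMl hIk)]; apply: hg.
by exists (rmorph_of gB gM).
Qed.

End Completeness.

Section Lifting.
Variables (A R S : comPzRingType) (IA : A -> Prop) (IR : R -> Prop) (IS : S -> Prop).
Variables (psiA : {rmorphism A -> A}) (psiR : {rmorphism R -> R}) (psiS : {rmorphism S -> S}).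
Variables (iotaR : {rmorphism A -> R}) (iotaS : {rmorphism A -> S}) (q : nat).
Hypotheses (hIS : is_ideal IS) (hqS : IS q%:R).
Hypotheses (psiR_frob : forall x, IR (psiR x - x ^+ q)) (psiS_frob : forall x, IS (psiS x - x ^+ q)).
Hypothesis IR_gen : forall x, IR x -> gen_ideal (fun y => exists2 a, IA a & y = iotaR a) x.
Hypotheses (iotaR_psi : forall a, iotaR (psiA a) = psiR (iotaR a))
  (iotaS_psi : forall a, iotaS (psiA a) = psiS (iotaS a))
  (iotaS_ideal : forall a, IA a -> IS (iotaS a)).

Implicit Types (f g : {rmorphism R -> S}).

Definition under_A g := forall a, g (iotaR a) = iotaS a.

Lemma under_A_ideal g : under_A g -> forall x, IR x -> IS (g x).
Proof.
move=> gA x /IR_gen; apply: gen_ideal_rmorph => // _ [a ha ->].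
by rewrite gA; apply: iotaS_ideal.
Qed.

Lemma under_A_psi g : under_A g -> forall x, IS (g (psiR x) - psiS (g x)).
Proof.
move=> gA x.
have -> : g (psiR x) - psiS (g x) = g (psiR x - x ^+ q) - (psiS (g x) - g x ^+ q).
  by rewrite rmorphB rmorphXn; ring.
by apply: (idealB hIS) => //; apply: under_A_ideal.
Qed.

Lemma under_A_congr_ideal f g k : under_A f -> under_A g ->
    (forall x, ideal_pow IS k.+1 (f x - g x)) ->
  forall y, IR y -> ideal_pow IS k.+2 (f y - g y).
Proof.
move=> fA gA hfg y hy.
have hIk := ideal_pow_is_ideal IS k.+2.
pose J y := IS (g y) /\ ideal_pow IS k.+2 (f y - g y).
suff: J y by case.
apply: (gen_ideal_min (J := J) _ _ (IR_gen hy)) => [|_ [a ha ->]]; last first.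
  by rewrite /J fA gA subrr; split; [apply: iotaS_ideal | apply: ideal0 hIk].
split=> [|x z [gx hx] [gz hz]|x [gx hx]|c x [gx hx]]; rewrite /J.
- by rewrite !rmorph0 subr0; split; [apply: ideal0 hIS | apply: ideal0 hIk].
- rewrite !rmorphD opprD addrACA; split; [exact: (idealD hIS) | exact: (idealD hIk)].
- by rewrite !rmorphN -opprD; split; [apply: (idealN hIS) | apply: (idealN hIk)].
- rewrite !rmorphM; split; first exact: (idealMl hIS).
  have -> : f c * f x - g c * g x = f c * (f x - g x) + g x * (f c - g c) by ring.
  by apply: (idealD hIk); [apply: (idealMl hIk) | apply: ideal_powMl].
Qed.

Lemma under_A_congr_psi f g k : under_A f -> under_A g ->
    (forall x, ideal_pow IS k.+1 (f x - g x)) ->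
  forall x, ideal_pow IS k.+2 (f (psiR x) - g (psiR x)).
Proof.
move=> fA gA hfg x.
have -> : psiR x = (psiR x - x ^+ q) + x ^+ q by rewrite subrK.
move: (psiR_frob x); set i := psiR x - x ^+ q => hi; clearbody i.
rewrite !rmorphD !rmorphXn opprD addrACA; apply: (idealD (ideal_pow_is_ideal _ _)).
  exact: (under_A_congr_ideal fA gA hfg hi).
exact: ideal_pow_subrX.
Qed.

Variables (psiS' : S -> S) (psiSK : cancel psiS psiS') (psiSK' : cancel psiS' psiS).
Hypothesis psiS'_ideal : forall x, IS x -> IS (psiS' x).

Definition psiS_inv : {rmorphism S -> S} := rmorph_inv psiSK psiSK'.

Definition psi_conj (g : {rmorphism R -> S}) : {rmorphism R -> S} := psiS_inv \o g \o psiR.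

Lemma psi_conjE g x : psi_conj g x = psiS_inv (g (psiR x)). Proof. by []. Qed.

Lemma psi_conj_fixedP g : psi_conj g =1 g <-> forall x, g (psiR x) = psiS (g x).
Proof.
split=> hg x; first by rewrite -(hg x) psi_conjE /= psiSK'.
by rewrite psi_conjE hg /= psiSK.
Qed.

Lemma under_A_psi_conj g : under_A g -> under_A (psi_conj g).
Proof. by move=> gA a; rewrite psi_conjE -iotaR_psi gA iotaS_psi /= psiSK. Qed.

Lemma ideal_pow_psiS_inv k x : ideal_pow IS k x -> ideal_pow IS k (psiS_inv x).
Proof. exact: ideal_pow_rmorph. Qed.

Lemma psi_conj_congr f g k : (forall x, ideal_pow IS k (f x - g x)) ->
  forall x, ideal_pow IS k (psi_conj f x - psi_conj g x).
Proof. by move=> hfg x; rewrite !psi_conjE -rmorphB; apply: ideal_pow_psiS_inv. Qed.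

Lemma psi_conj_congr_succ f g k : under_A f -> under_A g ->
    (forall x, ideal_pow IS k.+1 (f x - g x)) ->
  forall x, ideal_pow IS k.+2 (psi_conj f x - psi_conj g x).
Proof.
move=> fA gA hfg x; rewrite !psi_conjE -rmorphB; apply: ideal_pow_psiS_inv.
exact: under_A_congr_psi.
Qed.

Lemma psi_conj_congr1 g : under_A g -> forall x, IS (psi_conj g x - g x).
Proof.
move=> gA x; rewrite -[g x]psiSK psi_conjE -[psiS' _]/(psiS_inv _) -rmorphB /=.
exact/psiS'_ideal/under_A_psi.
Qed.

Section Complete.
Hypothesis hcompl : complete IS.

Lemma psi_conj_fixed_unique f g : under_A f -> under_A g ->
    psi_conj f =1 f -> psi_conj g =1 g -> (forall x, IS (f x - g x)) ->
  f =1 g.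
Proof.
move=> fA gA ff gf hfg x; apply: (complete_eq hcompl) => k; elim: k x => [|k IHk] x.
  exact/(ideal_pow1 hIS).
by rewrite -(ff x) -(gf x); apply: psi_conj_congr_succ.
Qed.

Lemma psi_conj_fixed_exists mu : under_A mu ->
  exists g : {rmorphism R -> S},
    [/\ under_A g, psi_conj g =1 g & forall x, IS (g x - mu x)].
Proof.
move=> muA; pose mu_ n := iter n psi_conj mu.
have mu_A n : under_A (mu_ n) by elim: n => //= n; apply: under_A_psi_conj.
have mu_cauchy n x : ideal_pow IS n.+1 (mu_ n.+1 x - mu_ n x).
  elim: n x => [|n IHn] x; first exact/(ideal_pow1 hIS)/psi_conj_congr1.
  exact: psi_conj_congr_succ (mu_A n.+1) (mu_A n) IHn x.
have [g hg] := complete_rmorph_limit hcompl mu_cauchy.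
have gA : under_A g.
  by move=> a; apply: (complete_eq hcompl) => k; rewrite -(mu_A k a); apply: hg.
exists g; split=> // x; last by apply/(ideal_pow1 hIS); apply: hg 0%N x.
apply: (complete_eq hcompl) => k.
have -> : psi_conj g x - g x = (psi_conj g x - mu_ k.+1 x) - (g x - mu_ k.+1 x).
  by rewrite opprB addrA subrK.
apply: (idealB (ideal_pow_is_ideal _ _)); first exact: psi_conj_congr (hg k) x.
by apply: ideal_powS; apply: hg.
Qed.

End Complete.
End Lifting.

Theorem proposition2p1 (p h : nat) (hp : prime p) (hh : (0 < h)%N)
  (A R S : comPzRingType)
  (IA : A -> Prop) (psiA : {rmorphism A -> A})
  (IR : R -> Prop) (psiR : {rmorphism R -> R})
  (IS : S -> Prop) (psiS : {rmorphism S -> S})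
  (objA : Cph_obj p h IA psiA) (objR : Cph_obj p h IR psiR)
  (objS : Cph_obj p h IS psiS)
  (iotaR : {rmorphism A -> R}) (iotaS : {rmorphism A -> S})
  (miR : Cph_morph IA psiA IR psiR iotaR)
  (miS : Cph_morph IA psiA IS psiS iotaS)
  (hIR : forall x, IR x <-> gen_ideal (fun y => exists2 a, IA a & y = iotaR a) x)
  (hcompl : complete IS) (hperf : perfect IS psiS)
  (mu : {rmorphism R -> S}) (hmu : forall a, mu (iotaR a) = iotaS a) :
  exists muhat : {rmorphism R -> S},
    [/\ Cph_morph IR psiR IS psiS muhat,
        (forall a, muhat (iotaR a) = iotaS a),
        (forall x, IS (muhat x - mu x))
      & (forall nu : {rmorphism R -> S},
           Cph_morph IR psiR IS psiS nu ->
           (forall a, nu (iotaR a) = iotaS a) ->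
           (forall x, IS (nu x - mu x)) ->
           forall x, nu x = muhat x)].
Proof.
case: objS => hIS hpS psiS_frob; case: objR => _ _ psiR_frob.
have hq : IS (p ^ h)%:R by rewrite natrX -(prednK hh) exprS; apply: (idealMr hIS).
have [[psiS' psiSK psiSK'] psiS_onto] := hperf.
have psiS'_ideal x : IS x -> IS (psiS' x) by move=> /psiS_onto [y hy <-]; rewrite psiSK.
have IR_gen x : IR x -> gen_ideal _ x := proj1 (hIR x).
have [muhat [muhatA muhat_fixed muhat_mu]] :=
  psi_conj_fixed_exists hIS hq psiR_frob psiS_frob IR_gen miR.2 miS.2 miS.1
    psiSK psiSK' psiS'_ideal hcompl hmu.
exists muhat; split=> //.
  split=> [x|]; first exact: (under_A_ideal hIS IR_gen miS.1 muhatA).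
  exact/(psi_conj_fixedP psiR psiSK psiSK').
move=> nu [_ nu_psi] nuA nu_mu.
apply: (psi_conj_fixed_unique (psiSK := psiSK) (psiSK' := psiSK') hIS hq psiR_frob
    IR_gen miS.1 psiS'_ideal hcompl nuA muhatA) => //.
  exact/(psi_conj_fixedP psiR psiSK psiSK').
move=> x; have -> : nu x - muhat x = (nu x - mu x) - (muhat x - mu x).
  by rewrite opprB addrA subrK.
exact: (idealB hIS (nu_mu x) (muhat_mu x)).
Qed.
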